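(* Consider the algorithm AASGDA described in the context and assume (A3)–(A5). Then for every $t\ge0$, with $\mathbb{E}_t[\cdot]=\mathbb{E}[\cdot\mid(x^t,y^t,\psi^t)]$ and $\mathbb{E}_{\hat t}[\cdot]=\mathbb{E}[\cdot\mid(x^{t+1},y^t,\psi^t)]$: (a) $\|\mathbb{E}_t[G_x^t(x^t,y^t,z_x^t)]-\nabla_x\mathcal{L}(x^t,y^t)\|\le L_1\|\nabla_x\psi^t(x^t,y^t)-\nabla_x\psi(x^t,y^t)\|_F$; (b) $\mathbb{E}_t\|G_x^t(x^t,y^t,z_x^t)\|^2\le\|\mathbb{E}_t[G_x^t(x^t,y^t,z_x^t)]\|^2+(1+\|\nabla_x\psi^t(x^t,y^t)\|_F^2)\sigma^2$; (c) $\|\mathbb{E}_{\hat t}[G_y^t(x^{t+1},y^t,z_y^t)]-\nabla_y\mathcal{L}(x^{t+1},y^t)\|\le L_1\|\nabla_y\psi^t(x^{t+1},y^t)-\nabla_y\psi(x^{t+1},y^t)\|_F$; (d) $\mathbb{E}_{\hat t}\|G_y^t(x^{t+1},y^t,z_y^t)\|^2\le\|\mathbb{E}_{\hat t}[G_y^t(x^{t+1},y^t,z_y^t)]\|^2+(1+\|\nabla_y\psi^t(x^{t+1},y^t)\|_F^2)\sigma^2$.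
   Context: Let $n,m,d$ be positive integers. Let $l:\mathbb{R}^n\times\mathbb{R}^m\times\mathbb{R}^d\to\mathbb{R}$ be continuously differentiable with partial gradients $\nabla_x l,\nabla_y l,\nabla_z l$; write $\nabla_{x,z}l=(\nabla_x l,\nabla_z l)$, $\nabla_{y,z}l=(\nabla_y l,\nabla_z l)$. Let $\mathbb{P}$ be a probability measure on $\mathbb{R}^d$ and $\psi:\mathbb{R}^n\times\mathbb{R}^m\to\mathbb{R}^d$ differentiable with partial Jacobians $\nabla_x\psi,\nabla_y\psi$; $\|\cdot\|_F$ is the Frobenius norm. $\mathcal{D}(x,y)$ is the law of $\psi(x,y)+\xi$, $\xi\sim\mathbb{P}$, and $\mathcal{L}(x,y)=\mathbb{E}_{z\sim\mathcal{D}(x,y)}[l(x,y,z)]$ (assumed differentiable with $\nabla_x\mathcal{L}(x,y)=\mathbb{E}_{z\sim\mathcal{D}(x,y)}[\nabla_x l+\nabla_x\psi(x,y)^\top\nabla_z l]$ and analogously for $y$). Assumptions (constants $L_0,\ell_0,L_1,\sigma>0$): (A3) For all $(x,y)$: $\mathbb{E}_{z\sim\mathcal{D}(x,y)}\|\nabla_x l(x,y,z)\|\le L_1$, $\mathbb{E}_{z\sim\mathcal{D}(x,y)}\|\nabla_z l(x,y,z)\|\le L_1$. (A4) For all $(x,y)$: $\mathbb{E}_{z\sim\mathcal{D}(x,y)}\|\nabla_{x,z}l-\mathbb{E}\nabla_{x,z}l\|^2\le\sigma^2$ and $\mathbb{E}_{z\sim\mathcal{D}(x,y)}\|\nabla_{y,z}l-\mathbb{E}\nabla_{y,z}l\|^2\le\sigma^2$.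 (A5) $\psi$ is $L_0$-Lipschitz and $\ell_0$-smooth. AASGDA (stepsizes $\eta_x,\eta_y>0$): start from $x^0\in\mathbb{R}^n$, $y^0\in\mathbb{R}^m$, initial estimate $\psi^0$. At iteration $t$, given $(x^t,y^t)$ and the current estimate $\psi^t$ (a differentiable map, possibly random, determined by the history), with $G_x^t(x,y,z)=\nabla_x l(x,y,z)+\nabla_x\psi^t(x,y)^\top\nabla_z l(x,y,z)$ and $G_y^t(x,y,z)=\nabla_y l(x,y,z)+\nabla_y\psi^t(x,y)^\top\nabla_z l(x,y,z)$: draw $z_x^t$ with law $\mathcal{D}(x^t,y^t)$ conditionally on the past, set $x^{t+1}=x^t-\eta_x G_x^t(x^t,y^t,z_x^t)$; draw $z_y^t$ with law $\mathcal{D}(x^{t+1},y^t)$ conditionally on the past (including $x^{t+1}$), set $y^{t+1}=y^t+\eta_y G_y^t(x^{t+1},y^t,z_y^t)$; then form $\psi^{t+1}$ by an arbitrary estimation rule. *)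

From HB Require Import structures.
From mathcomp Require Import all_boot all_order all_algebra.
From mathcomp Require Import all_classical all_reals all_analysis.
Set Implicit Arguments. Unset Strict Implicit. Unset Printing Implicit Defensive.
Import Order.TTheory GRing.Theory Num.Theory numFieldNormedType.Exports.
Local Open Scope classical_set_scope.
Local Open Scope ring_scope.

(* Frobenius norm of a matrix; for a column vector it is the Euclidean norm. *)
Definition frob (R : realType) (p q : nat) (A : 'M[R]_(p, q)) : R :=
  Num.sqrt (\sum_(i < p) \sum_(j < q) A i j ^+ 2).

Definition Evec (R : realType) (dT : measure_display) (T : measurableType dT)
  (P : probability T R) (p q : nat) (f : T -> 'M[R]_(p, q)) : 'M[R]_(p, q) :=
  \matrix_(i, j) Rintegral P setT (fun w => f w i j).

Definition Ebar (R : realType) (dT : measure_display) (T : measurableType dT)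
  (P : probability T R) (f : T -> R) : \bar R :=
  (\int[P]_w (f w)%:E)%E.

(* z ~ D(x,y) is realized as z = psi(x,y) + xi(w), w ~ P, xi having law the
   noise distribution. *)
Definition zof (R : realType) (T : Type) (n m d : nat)
  (psi : 'cV[R]_n -> 'cV[R]_m -> 'cV[R]_d) (xi : T -> 'cV[R]_d)
  (x : 'cV[R]_n) (y : 'cV[R]_m) (w : T) : 'cV[R]_d := psi x y + xi w.

Definition partials1 (R : realType) (n m d : nat)
  (f : 'cV[R]_n -> 'cV[R]_m -> 'cV[R]_d) (J : 'cV[R]_n -> 'cV[R]_m -> 'M[R]_(d, n)) :=
  forall x y (j : 'I_n), is_derive x (delta_mx j 0 : 'cV[R]_n) (fun x' => f x' y) (col j (J x y)).

Definition partials2 (R : realType) (n m d : nat)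
  (f : 'cV[R]_n -> 'cV[R]_m -> 'cV[R]_d) (J : 'cV[R]_n -> 'cV[R]_m -> 'M[R]_(d, m)) :=
  forall x y (j : 'I_m), is_derive y (delta_mx j 0 : 'cV[R]_m) (fun y' => f x y') (col j (J x y)).

Definition diff_with_jac (R : realType) (n m d : nat)
  (f : 'cV[R]_n -> 'cV[R]_m -> 'cV[R]_d)
  (Jx : 'cV[R]_n -> 'cV[R]_m -> 'M[R]_(d, n)) (Jy : 'cV[R]_n -> 'cV[R]_m -> 'M[R]_(d, m)) :=
  [/\ forall p : 'cV[R]_n * 'cV[R]_m, differentiable (fun q : 'cV[R]_n * 'cV[R]_m => f q.1 q.2) p,
      partials1 f Jx & partials2 f Jy].

Definition C1_with_grads (R : realType) (n m d : nat)
  (l : 'cV[R]_n -> 'cV[R]_m -> 'cV[R]_d -> R)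
  (gx : 'cV[R]_n -> 'cV[R]_m -> 'cV[R]_d -> 'cV[R]_n)
  (gy : 'cV[R]_n -> 'cV[R]_m -> 'cV[R]_d -> 'cV[R]_m)
  (gz : 'cV[R]_n -> 'cV[R]_m -> 'cV[R]_d -> 'cV[R]_d) :=
  [/\ continuous (fun p : ('cV[R]_n * 'cV[R]_m) * 'cV[R]_d => gx p.1.1 p.1.2 p.2),
      continuous (fun p : ('cV[R]_n * 'cV[R]_m) * 'cV[R]_d => gy p.1.1 p.1.2 p.2),
      continuous (fun p : ('cV[R]_n * 'cV[R]_m) * 'cV[R]_d => gz p.1.1 p.1.2 p.2) &
     [/\ (forall x y z (i : 'I_n), is_derive x (delta_mx i 0 : 'cV[R]_n) (fun x' => l x' y z) (gx x y z i 0)),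
      (forall x y z (i : 'I_m), is_derive y (delta_mx i 0 : 'cV[R]_m) (fun y' => l x y' z) (gy x y z i 0)) &
      (forall x y z (i : 'I_d), is_derive z (delta_mx i 0 : 'cV[R]_d) (fun z' => l x y z') (gz x y z i 0))]].

Definition Gx (R : realType) (n m d : nat)
  (gx : 'cV[R]_n -> 'cV[R]_m -> 'cV[R]_d -> 'cV[R]_n)
  (gz : 'cV[R]_n -> 'cV[R]_m -> 'cV[R]_d -> 'cV[R]_d)
  (Jtx : 'cV[R]_n -> 'cV[R]_m -> 'M[R]_(d, n)) x y z : 'cV[R]_n :=
  gx x y z + (Jtx x y)^T *m gz x y z.

Definition Gy (R : realType) (n m d : nat)
  (gy : 'cV[R]_n -> 'cV[R]_m -> 'cV[R]_d -> 'cV[R]_m)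
  (gz : 'cV[R]_n -> 'cV[R]_m -> 'cV[R]_d -> 'cV[R]_d)
  (Jty : 'cV[R]_n -> 'cV[R]_m -> 'M[R]_(d, m)) x y z : 'cV[R]_m :=
  gy x y z + (Jty x y)^T *m gz x y z.

(* Both estimators have the form [G = a + A^T b], where [(a, b)] is the random
   pair of partial gradients [(grad_x l, grad_z l)] (resp. [(grad_y l, grad_z l)])
   at [z ~ D(x, y)] and [A] is a Jacobian.  By linearity [E G = E a + A^T E b],
   so two estimators differ in mean by [(A - B)^T E b], of norm at most
   [|A - B|_F |E b| <= L1 |A - B|_F] by Jensen and (A3).  For the second moment,
   [E |G|^2 = |E G|^2 + E |G - E G|^2] with [G - E G = (a - E a) + A^T (b - E b)],
   whose squared norm is at most [1 + |A|_F^2] times that of the centred pair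
   [(a, b)] by Cauchy-Schwarz, and (A4) bounds the expectation of the latter by
   [sigma^2].  Since [P] has mass one, (A4) also makes every coordinate of [a]
   and [b] integrable. *)

From HB Require Import structures.
From mathcomp Require Import all_boot all_order all_algebra.
From mathcomp Require Import all_classical all_reals all_analysis.
From mathcomp Require Import measurable_realfun ring lra.
Set Implicit Arguments. Unset Strict Implicit. Unset Printing Implicit Defensive.
Import Order.TTheory GRing.Theory Num.Theory numFieldNormedType.Exports.
Local Open Scope classical_set_scope.
Local Open Scope ring_scope.

Section FrobeniusNorm.
Variable R : realType.

Lemma CauchySchwarz_sum (I : finType) (u v : I -> R) :
  (\sum_i u i * v i) ^+ 2 <= (\sum_i u i ^+ 2) * (\sum_i v i ^+ 2).
Proof.
(* Lagrange's identity: the double sum [S] is twice the gap between the two sides. *)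
set S := \sum_i \sum_j (u i * v j - u j * v i) ^+ 2.
have S_ge0 : 0 <= S.
  by apply: sumr_ge0 => i _; apply: sumr_ge0 => j _; exact: sqr_ge0.
have uv : (\sum_i u i ^+ 2) * (\sum_j v j ^+ 2) = \sum_i \sum_j u i ^+ 2 * v j ^+ 2.
  by rewrite mulr_suml; apply: eq_bigr => i _; rewrite mulr_sumr.
have vu : (\sum_i u i ^+ 2) * (\sum_j v j ^+ 2) = \sum_i \sum_j u j ^+ 2 * v i ^+ 2.
  by rewrite uv exchange_big.
have sq : (\sum_i u i * v i) ^+ 2 = \sum_i \sum_j (u i * v i) * (u j * v j).
  by rewrite expr2 mulr_suml; apply: eq_bigr => i _; rewrite mulr_sumr.
have S_expand : S = \sum_i \sum_j u i ^+ 2 * v j ^+ 2 + \sum_i \sum_j u j ^+ 2 * v i ^+ 2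
                    - 2 * \sum_i \sum_j (u i * v i) * (u j * v j).
  rewrite mulr_sumr -big_split -sumrB /S; apply: eq_bigr => i _.
  by rewrite mulr_sumr -big_split -sumrB; apply: eq_bigr => j _ /=; ring.
rewrite -uv -vu -sq in S_expand; lra.
Qed.

Lemma frob_ge0 p q (A : 'M[R]_(p, q)) : 0 <= frob A.
Proof. exact: sqrtr_ge0. Qed.

Lemma sqr_frob p q (A : 'M[R]_(p, q)) : frob A ^+ 2 = \sum_i \sum_j A i j ^+ 2.
Proof.
by rewrite sqr_sqrtr //; apply: sumr_ge0 => i _; apply: sumr_ge0 => j _; exact: sqr_ge0.
Qed.

Lemma sqr_frob_cV k (u : 'cV[R]_k) : frob u ^+ 2 = \sum_i u i 0 ^+ 2.
Proof. by rewrite sqr_frob; apply: eq_bigr => i _; rewrite big_ord1. Qed.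

Lemma frob_trmx p q (A : 'M[R]_(p, q)) : frob A^T = frob A.
Proof.
rewrite /frob exchange_big; congr Num.sqrt.
by apply: eq_bigr => i _; apply: eq_bigr => j _; rewrite mxE.
Qed.

Lemma frob_mulmx_le p q r (A : 'M[R]_(p, q)) (B : 'M[R]_(q, r)) :
  frob (A *m B) <= frob A * frob B.
Proof.
rewrite -ler_sqr ?nnegrE ?mulr_ge0 ?frob_ge0 // exprMn !sqr_frob.
rewrite [X in _ <= _ * X]exchange_big mulr_suml; apply: ler_sum => i _.
rewrite mulr_sumr; apply: ler_sum => k _; rewrite mxE; exact: CauchySchwarz_sum.
Qed.

Lemma sqr_frob_col_mx p1 p2 q (A : 'M[R]_(p1, q)) (B : 'M[R]_(p2, q)) :
  frob (col_mx A B) ^+ 2 = frob A ^+ 2 + frob B ^+ 2.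
Proof.
rewrite !sqr_frob big_split_ord; congr (_ + _); apply: eq_bigr => i _.
  by apply: eq_bigr => j _; rewrite col_mxEu.
by apply: eq_bigr => j _; rewrite col_mxEd.
Qed.

Definition vdot k (u v : 'cV[R]_k) : R := \sum_i u i 0 * v i 0.

Lemma vdotvv k (u : 'cV[R]_k) : vdot u u = frob u ^+ 2.
Proof. by rewrite sqr_frob_cV; apply: eq_bigr => i _; rewrite expr2. Qed.

Lemma vdot_le_frob k (u v : 'cV[R]_k) : vdot u v <= frob u * frob v.
Proof.
apply: le_trans (ler_norm _) _.
rewrite -ler_sqr ?nnegrE ?mulr_ge0 ?frob_ge0 // real_normK ?num_real //.
by rewrite exprMn !sqr_frob_cV; exact: CauchySchwarz_sum.
Qed.

Lemma sqr_frobD k (u v : 'cV[R]_k) :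
  frob (u + v) ^+ 2 = frob u ^+ 2 + 2 * vdot u v + frob v ^+ 2.
Proof.
rewrite !sqr_frob_cV /vdot mulr_sumr -!big_split /=.
by apply: eq_bigr => i _; rewrite !mxE; ring.
Qed.

Lemma sqr_frob_add_mulmx_le p q (A : 'M[R]_(p, q)) (u : 'cV[R]_p) (v : 'cV[R]_q) :
  frob (u + A *m v) ^+ 2 <= (1 + frob A ^+ 2) * frob (col_mx u v) ^+ 2.
Proof.
rewrite sqr_frobD sqr_frob_col_mx.
have := vdot_le_frob u (A *m v); have := frob_mulmx_le A v.
have := frob_ge0 u; have := frob_ge0 (A *m v); have := frob_ge0 A; have := frob_ge0 v.
(* AM-GM: [2 |u| |A| |v| <= |A|^2 |u|^2 + |v|^2]. *)
have := sqr_ge0 (frob A * frob u - frob v).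
move: (vdot _ _) (frob u) (frob v) (frob A) (frob (A *m v)) => uAv nu nv nA nAv.
nra.
Qed.

End FrobeniusNorm.

Section RealIntegral.
Context d (T : measurableType d) (R : realType) (P : probability T R).
Local Notation Rintegrable f := (P.-integrable setT (EFin \o f)).
Implicit Types f g : T -> R.

Lemma Rintegral_cst_prob (k : R) : \int[P]_w k = k.
Proof. by rewrite Rintegral_cst //= (@probability_setT _ _ _ P) mulr1. Qed.

Lemma Ebar_Rintegral f : Rintegrable f -> Ebar P f = (\int[P]_w f w)%:E.
Proof. by move=> If; rewrite /Ebar /Rintegral fineK //; exact: integrable_fin_num. Qed.

Lemma Rintegrable_cst (k : R) : Rintegrable (fun=> k).
Proof. exact: finite_measure_integrable_cst. Qed.

Lemma RintegrableD f g : Rintegrable f -> Rintegrable g -> Rintegrable (f \+ g).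
Proof. by move=> If Ig; apply: eq_integrable (integrableD measurableT If Ig). Qed.

Lemma RintegrableB f g : Rintegrable f -> Rintegrable g -> Rintegrable (f \- g).
Proof. by move=> If Ig; apply: eq_integrable (integrableB measurableT If Ig). Qed.

Lemma RintegrableZl (k : R) f : Rintegrable f -> Rintegrable (fun w => k * f w).
Proof. by move=> If; apply: eq_integrable (integrableZl measurableT k If). Qed.

Lemma Rintegrable_sum (I : Type) (s : seq I) (f : I -> T -> R) :
  (forall i, Rintegrable (f i)) -> Rintegrable (fun w => \sum_(i <- s) f i w).
Proof.
move=> If; apply: eq_integrable (integrable_sum measurableT s (fun i _ => If i)) => // w _.
by rewrite /= sumEFin.
Qed.

Lemma Rintegral_sum (I : Type) (s : seq I) (f : I -> T -> R) :
  (forall i, Rintegrable (f i)) ->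
  \int[P]_w (\sum_(i <- s) f i w) = \sum_(i <- s) \int[P]_w f i w.
Proof.
move=> If; elim: s => [|i s IHs].
  by under eq_Rintegral do rewrite big_nil; rewrite Rintegral_cst_prob big_nil.
under eq_Rintegral do rewrite big_cons.
by rewrite big_cons -IHs RintegralD //; exact: Rintegrable_sum.
Qed.

Lemma le_Rintegrable f g :
  measurable_fun setT f -> (forall w, `|f w| <= g w) -> Rintegrable g -> Rintegrable f.
Proof.
move=> mf fg; apply: le_integrable => //; first exact/measurable_EFinP.
by move=> w _; rewrite /= lee_fin (le_trans (fg w)) // ler_norm.
Qed.

Lemma Rintegrable_Ebar_le f (c : R) : measurable_fun setT f -> (forall w, 0 <= f w) ->
  (Ebar P f <= c%:E)%E -> Rintegrable f.
Proof.
move=> mf f_ge0 Ef_le; apply/integrableP; split; first exact/measurable_EFinP.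
apply: le_lt_trans (ltry c); apply: le_trans Ef_le; rewrite le_eqVlt; apply/orP; left.
by apply/eqP; apply: eq_integral => w _ /=; rewrite ger0_norm.
Qed.

(* [|f| <= 1 + f^2], and constants are integrable because [P] is finite. *)
Lemma Rintegrable_of_sqr f :
  measurable_fun setT f -> Rintegrable (fun w => f w ^+ 2) -> Rintegrable f.
Proof.
move=> mf If2; apply: le_Rintegrable mf _ (RintegrableD (Rintegrable_cst 1) If2) => w /=.
rewrite -real_normK ?num_real //; have := normr_ge0 (f w); nra.
Qed.

End RealIntegral.

Section VectorExpectation.
Context d (T : measurableType d) (R : realType) (P : probability T R).
Local Notation Rintegrable f := (P.-integrable setT (EFin \o f)).

Definition measurable_cV p (X : T -> 'cV[R]_p) :=
  forall i, measurable_fun setT (fun w => X w i 0).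

Definition integrable_cV p (X : T -> 'cV[R]_p) :=
  forall i, Rintegrable (fun w => X w i 0).

Lemma integrable_cV_measurable p (X : T -> 'cV[R]_p) :
  integrable_cV X -> measurable_cV X.
Proof. by move=> IX i; have /integrableP[/measurable_EFinP] := IX i. Qed.

Lemma measurable_cV_subr p (X : T -> 'cV[R]_p) (v : 'cV[R]_p) :
  measurable_cV X -> measurable_cV (fun w => X w - v).
Proof.
move=> mX i; have -> : (fun w => (X w - v) i 0) = (fun w => X w i 0 - v i 0).
  by apply/funext => w; rewrite !mxE.
exact: measurable_funB.
Qed.

Lemma measurable_cV_col_mx p q (X : T -> 'cV[R]_p) (Y : T -> 'cV[R]_q) :
  measurable_cV X -> measurable_cV Y -> measurable_cV (fun w => col_mx (X w) (Y w)).
Proof.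
move=> mX mY i; case: (split_ordP i) => k ->.
  by under eq_fun do rewrite col_mxEu; exact: mX.
by under eq_fun do rewrite col_mxEd; exact: mY.
Qed.

Lemma measurable_sqr_frob p (X : T -> 'cV[R]_p) :
  measurable_cV X -> measurable_fun setT (fun w => frob (X w) ^+ 2).
Proof.
move=> mX; under eq_fun do rewrite sqr_frob_cV.
by apply: measurable_sum => i; exact: measurable_funX.
Qed.

Lemma measurable_frob p (X : T -> 'cV[R]_p) :
  measurable_cV X -> measurable_fun setT (fun w => frob (X w)).
Proof.
move=> mX; have -> : (fun w => frob (X w)) = (fun w => Num.sqrt (frob (X w) ^+ 2)).
  by apply/funext => w; rewrite sqrtr_sqr ger0_norm ?frob_ge0.
exact: measurableT_comp (continuous_measurable_fun (@sqrt_continuous R))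
                        (measurable_sqr_frob mX).
Qed.

Lemma integrable_cVD p (X Y : T -> 'cV[R]_p) :
  integrable_cV X -> integrable_cV Y -> integrable_cV (fun w => X w + Y w).
Proof.
move=> IX IY i; apply: eq_integrable (RintegrableD (IX i) (IY i)) => // w _ /=.
by rewrite mxE.
Qed.

Lemma integrable_cV_mulmx p q (M : 'M[R]_(q, p)) (X : T -> 'cV[R]_p) :
  integrable_cV X -> integrable_cV (fun w => M *m X w).
Proof.
move=> IX i.
have := Rintegrable_sum (index_enum 'I_p) (fun k => RintegrableZl (M i k) (IX k)).
by apply: eq_integrable => // w _ /=; rewrite mxE.
Qed.

Lemma EvecD p (X Y : T -> 'cV[R]_p) : integrable_cV X -> integrable_cV Y ->
  Evec P (fun w => X w + Y w) = Evec P X + Evec P Y.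
Proof.
move=> IX IY; apply/matrixP => i j; rewrite (ord1 j) !mxE -RintegralD //.
by apply: eq_Rintegral => w _; rewrite mxE.
Qed.

Lemma Evec_mulmx p q (M : 'M[R]_(q, p)) (X : T -> 'cV[R]_p) :
  integrable_cV X -> Evec P (fun w => M *m X w) = M *m Evec P X.
Proof.
move=> IX; apply/matrixP => i j; rewrite (ord1 j) !mxE.
under eq_Rintegral do rewrite mxE.
rewrite Rintegral_sum => [|k]; last exact: RintegrableZl.
by apply: eq_bigr => k _; rewrite RintegralZl // mxE.
Qed.

Lemma Evec_col_mx p q (X : T -> 'cV[R]_p) (Y : T -> 'cV[R]_q) :
  Evec P (fun w => col_mx (X w) (Y w)) = col_mx (Evec P X) (Evec P Y).
Proof.
apply/matrixP => i j; rewrite (ord1 j) mxE; case: (split_ordP i) => k ->.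
  by rewrite col_mxEu mxE; apply: eq_Rintegral => w _; rewrite col_mxEu.
by rewrite col_mxEd mxE; apply: eq_Rintegral => w _; rewrite col_mxEd.
Qed.

Lemma Rintegrable_vdot p (v : 'cV[R]_p) (X : T -> 'cV[R]_p) :
  integrable_cV X -> Rintegrable (fun w => vdot v (X w)).
Proof. by move=> IX; apply: Rintegrable_sum => i; exact: RintegrableZl. Qed.

Lemma Rintegral_vdot p (v : 'cV[R]_p) (X : T -> 'cV[R]_p) :
  integrable_cV X -> \int[P]_w vdot v (X w) = vdot v (Evec P X).
Proof.
move=> IX; rewrite Rintegral_sum => [|i]; last exact: RintegrableZl.
by apply: eq_bigr => i _; rewrite RintegralZl // mxE.
Qed.

(* Jensen's inequality for the norm: [|E X|^2 = E <E X, X> <= |E X| E |X|]. *)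
Lemma frob_Evec_le p (X : T -> 'cV[R]_p) :
  integrable_cV X -> Rintegrable (fun w => frob (X w)) ->
  frob (Evec P X) <= \int[P]_w frob (X w).
Proof.
move=> IX IfX; set e := Evec P X.
have e_le : frob e ^+ 2 <= frob e * \int[P]_w frob (X w).
  rewrite -vdotvv {2}/e -Rintegral_vdot // -RintegralZl //.
  apply: le_Rintegral => //; first exact: Rintegrable_vdot.
    exact: RintegrableZl.
  by move=> w _; exact: vdot_le_frob.
have [e0|e_neq0] := eqVneq (frob e) 0.
  by rewrite e0; apply: Rintegral_ge0 => w _; exact: frob_ge0.
have e_gt0 : 0 < frob e by rewrite lt_def e_neq0 frob_ge0.
by rewrite -(ler_pM2l e_gt0) -expr2.
Qed.

Lemma integrable_cV_of_sqr_frob p (X : T -> 'cV[R]_p) (v : 'cV[R]_p) :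
  measurable_cV X -> Rintegrable (fun w => frob (X w - v) ^+ 2) -> integrable_cV X.
Proof.
move=> mX Idev i.
have mXi : measurable_fun setT (fun w => X w i 0 - v i 0).
  exact: measurable_funB (mX i) (measurable_cst _).
have Isqr : Rintegrable (fun w => (X w i 0 - v i 0) ^+ 2).
  apply: le_Rintegrable Idev => [|w]; first exact: measurable_funX.
  rewrite ger0_norm ?sqr_ge0 // sqr_frob_cV (bigD1 i) //= !mxE lerDl.
  by apply: sumr_ge0 => k _; exact: sqr_ge0.
have := RintegrableD (Rintegrable_of_sqr mXi Isqr) (Rintegrable_cst P (v i 0)).
by apply: eq_integrable => // w _ /=; rewrite subrK.
Qed.

Lemma Ebar_sqr_frob_variance p (X : T -> 'cV[R]_p) :
  integrable_cV X -> Rintegrable (fun w => frob (X w - Evec P X) ^+ 2) ->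
  Ebar P (fun w => frob (X w) ^+ 2)
  = (frob (Evec P X) ^+ 2 + \int[P]_w frob (X w - Evec P X) ^+ 2)%:E.
Proof.
move=> IX Idev; set m := Evec P X.
have expand w : frob (X w) ^+ 2 = (2 * vdot m (X w) - frob m ^+ 2) + frob (X w - m) ^+ 2.
  rewrite !sqr_frob_cV /vdot mulr_sumr -sumrB -big_split /=.
  by apply: eq_bigr => i _; rewrite !mxE; ring.
have Ilin : Rintegrable (fun w => 2 * vdot m (X w) - frob m ^+ 2).
  exact: RintegrableB (RintegrableZl _ (Rintegrable_vdot _ IX)) (Rintegrable_cst _ _).
rewrite (funext expand) Ebar_Rintegral; last exact: RintegrableD.
rewrite RintegralD // RintegralB //; last 2 first.
- exact: RintegrableZl (Rintegrable_vdot _ IX).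
- exact: Rintegrable_cst.
rewrite RintegralZl //; last exact: Rintegrable_vdot.
by rewrite Rintegral_vdot // Rintegral_cst_prob vdotvv; congr (_%:E); ring.
Qed.

End VectorExpectation.

Section GradientEstimator.
Context d (T : measurableType d) (R : realType) (P : probability T R) (p q : nat).
Local Notation Rintegrable f := (P.-integrable setT (EFin \o f)).
Variables (a : T -> 'cV[R]_p) (b : T -> 'cV[R]_q) (L1 sigma : R).
Hypotheses (ma : measurable_cV a) (mb : measurable_cV b).
Hypothesis Efrob_b_le : (Ebar P (fun w => frob (b w)) <= L1%:E)%E.
Hypothesis variance_le : (Ebar P (fun w =>
  (frob (col_mx (a w) (b w) - Evec P (fun w' => col_mx (a w') (b w'))) ^+ 2)%R)
  <= (sigma ^+ 2)%R%:E)%E.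
Local Notation c := (fun w => col_mx (a w) (b w)).

Let Rintegrable_variance : Rintegrable (fun w => frob (c w - Evec P c) ^+ 2).
Proof.
apply: Rintegrable_Ebar_le variance_le => [|w]; last exact: sqr_ge0.
exact/measurable_sqr_frob/measurable_cV_subr/measurable_cV_col_mx.
Qed.

Let integrable_c : integrable_cV P c.
Proof.
exact: integrable_cV_of_sqr_frob (measurable_cV_col_mx ma mb) Rintegrable_variance.
Qed.

Let integrable_a : integrable_cV P a.
Proof.
move=> k; apply: eq_integrable (integrable_c (lshift q k)) => // w _ /=.
by rewrite col_mxEu.
Qed.

Let integrable_b : integrable_cV P b.
Proof.
move=> k; apply: eq_integrable (integrable_c (rshift p k)) => // w _ /=.
by rewrite col_mxEd.
Qed.

Let Evec_estimator (A : 'M[R]_(q, p)) :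
  Evec P (fun w => a w + A^T *m b w) = Evec P a + A^T *m Evec P b.
Proof. by rewrite EvecD ?Evec_mulmx //; exact: integrable_cV_mulmx. Qed.

Let frob_Evec_b_le : frob (Evec P b) <= L1.
Proof.
have Ifrob_b : Rintegrable (fun w => frob (b w)).
  exact: Rintegrable_Ebar_le (measurable_frob mb) (fun w => frob_ge0 _) Efrob_b_le.
apply: le_trans (frob_Evec_le integrable_b Ifrob_b) _.
by rewrite -lee_fin -Ebar_Rintegral.
Qed.

Lemma estimator_bias_le (A B : 'M[R]_(q, p)) :
  frob (Evec P (fun w => a w + A^T *m b w) - Evec P (fun w => a w + B^T *m b w))
  <= L1 * frob (A - B).
Proof.
rewrite !Evec_estimator opprD addrACA subrr add0r -mulmxBl -linearB /=.
rewrite mulrC; apply: le_trans (frob_mulmx_le _ _) _.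
by rewrite frob_trmx ler_wpM2l ?frob_ge0.
Qed.

Lemma estimator_second_moment_le (A : 'M[R]_(q, p)) :
  (Ebar P (fun w => (frob (a w + A^T *m b w) ^+ 2)%R)
   <= (frob (Evec P (fun w => a w + A^T *m b w)) ^+ 2
       + (1 + frob A ^+ 2) * sigma ^+ 2)%R%:E)%E.
Proof.
set G := fun w => a w + A^T *m b w.
have IG : integrable_cV P G := integrable_cVD integrable_a (integrable_cV_mulmx _ integrable_b).
have dev_le w :
    frob (G w - Evec P G) ^+ 2 <= (1 + frob A ^+ 2) * frob (c w - Evec P c) ^+ 2.
  rewrite Evec_col_mx opp_col_mx add_col_mx Evec_estimator /G.
  have -> : a w + A^T *m b w - (Evec P a + A^T *m Evec P b)
            = (a w - Evec P a) + A^T *m (b w - Evec P b).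
    by rewrite mulmxBr opprD addrACA.
  by rewrite -(frob_trmx A); exact: sqr_frob_add_mulmx_le.
have Idev : Rintegrable (fun w => frob (G w - Evec P G) ^+ 2).
  apply: le_Rintegrable (RintegrableZl _ Rintegrable_variance) => [|w].
    exact/measurable_sqr_frob/measurable_cV_subr/integrable_cV_measurable.
  by rewrite ger0_norm ?sqr_ge0 // dev_le.
rewrite Ebar_sqr_frob_variance // lee_fin lerD2l.
apply: le_trans (le_Rintegral measurableT Idev (RintegrableZl _ Rintegrable_variance)
                              (fun w _ => dev_le w)) _.
rewrite RintegralZl //; apply: ler_wpM2l; first by rewrite addr_ge0 ?sqr_ge0.
by rewrite -lee_fin -Ebar_Rintegral.
Qed.

End GradientEstimator.

Theorem lemma2p2
  (R : realType) (dT : measure_display) (T : measurableType dT)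
  (P : probability T R) (n m d : nat)
  (l : 'cV[R]_n -> 'cV[R]_m -> 'cV[R]_d -> R)
  (gx : 'cV[R]_n -> 'cV[R]_m -> 'cV[R]_d -> 'cV[R]_n)
  (gy : 'cV[R]_n -> 'cV[R]_m -> 'cV[R]_d -> 'cV[R]_m)
  (gz : 'cV[R]_n -> 'cV[R]_m -> 'cV[R]_d -> 'cV[R]_d)
  (psi : 'cV[R]_n -> 'cV[R]_m -> 'cV[R]_d)
  (Jx : 'cV[R]_n -> 'cV[R]_m -> 'M[R]_(d, n))
  (Jy : 'cV[R]_n -> 'cV[R]_m -> 'M[R]_(d, m))
  (xi : T -> 'cV[R]_d)
  (L0 l0 L1 sigma : R) :
  (0 < n)%N -> (0 < m)%N -> (0 < d)%N ->
  0 < L0 -> 0 < l0 -> 0 < L1 -> 0 < sigma ->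
  C1_with_grads l gx gy gz ->
  diff_with_jac psi Jx Jy ->
  (* the noise xi ~ P and the integrands are random variables *)
  (forall x y (i : 'I_n), measurable_fun setT (fun w => gx x y (zof psi xi x y w) i 0)) ->
  (forall x y (i : 'I_m), measurable_fun setT (fun w => gy x y (zof psi xi x y w) i 0)) ->
  (forall x y (i : 'I_d), measurable_fun setT (fun w => gz x y (zof psi xi x y w) i 0)) ->
  (* (A3) *)
  (forall x y, (Ebar P (fun w => frob (gx x y (zof psi xi x y w))) <= L1%:E)%E) ->
  (forall x y, (Ebar P (fun w => frob (gz x y (zof psi xi x y w))) <= L1%:E)%E) ->
  (* (A4) *)
  (forall x y, (Ebar P (fun w => (
      frob (col_mx (gx x y (zof psi xi x y w)) (gz x y (zof psi xi x y w))
            - Evec P (fun w' => col_mx (gx x y (zof psi xi x y w')) (gz x y (zof psi xi x y w'))))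
      ^+ 2)%R) <= (sigma ^+ 2)%R%:E)%E) ->
  (forall x y, (Ebar P (fun w => (
      frob (col_mx (gy x y (zof psi xi x y w)) (gz x y (zof psi xi x y w))
            - Evec P (fun w' => col_mx (gy x y (zof psi xi x y w')) (gz x y (zof psi xi x y w'))))
      ^+ 2)%R) <= (sigma ^+ 2)%R%:E)%E) ->
  (* (A5) *)
  (forall x y x' y', frob (psi x y - psi x' y') <= L0 * frob (col_mx (x - x') (y - y'))) ->
  (forall x y x' y', frob (row_mx (Jx x y) (Jy x y) - row_mx (Jx x' y') (Jy x' y'))
                     <= l0 * frob (col_mx (x - x') (y - y'))) ->
  (* any current estimate psi^t (a differentiable map) and any current iterate *)
  forall (psit : 'cV[R]_n -> 'cV[R]_m -> 'cV[R]_d)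
         (Jtx : 'cV[R]_n -> 'cV[R]_m -> 'M[R]_(d, n))
         (Jty : 'cV[R]_n -> 'cV[R]_m -> 'M[R]_(d, m)),
  diff_with_jac psit Jtx Jty ->
  forall (x : 'cV[R]_n) (y : 'cV[R]_m),
  let gradLx := Evec P (fun w => Gx gx gz Jx x y (zof psi xi x y w)) in
  let gradLy := Evec P (fun w => Gy gy gz Jy x y (zof psi xi x y w)) in
  let EGx := Evec P (fun w => Gx gx gz Jtx x y (zof psi xi x y w)) in
  let EGy := Evec P (fun w => Gy gy gz Jty x y (zof psi xi x y w)) in
  [/\ frob (EGx - gradLx) <= L1 * frob (Jtx x y - Jx x y),
      (Ebar P (fun w => (frob (Gx gx gz Jtx x y (zof psi xi x y w)) ^+ 2)%R)
        <= (frob EGx ^+ 2 + (1 + frob (Jtx x y) ^+ 2) * sigma ^+ 2)%R%:E)%E,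
      frob (EGy - gradLy) <= L1 * frob (Jty x y - Jy x y) &
      (Ebar P (fun w => (frob (Gy gy gz Jty x y (zof psi xi x y w)) ^+ 2)%R)
        <= (frob EGy ^+ 2 + (1 + frob (Jty x y) ^+ 2) * sigma ^+ 2)%R%:E)%E].
Proof.
move=> _ _ _ _ _ _ _ _ _ mgx mgy mgz _ A3z A4x A4y _ _ psit Jtx Jty _ x y /=.
split.
- exact: (estimator_bias_le (mgx x y) (mgz x y) (A3z x y) (A4x x y)).
- exact: (estimator_second_moment_le (mgx x y) (mgz x y) (A4x x y)).
- exact: (estimator_bias_le (mgy x y) (mgz x y) (A3z x y) (A4y x y)).
- exact: (estimator_second_moment_le (mgy x y) (mgz x y) (A4y x y)).
Qed.
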